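(* Let $n\ge1$, let $\mathcal X\subseteq\mathbb N^n$ be a finite Ferrers set, and let $\Pi:\mathcal X\to\mathbb R_{>0}$. Let $\tilde{\mathcal B}_{\mathcal X}$ be the set of functions $\Gamma:\mathcal X\to\mathbb R_{\ge0}$ that are componentwise non-increasing ($\Gamma(x)\ge\Gamma(x+e_i)$ whenever $x,x+e_i\in\mathcal X$) and satisfy $\sum_{x\in\mathcal X}\Pi(x)\Gamma(x)=1$. For each Ferrers subset $\mathcal A\subseteq\mathcal X$ define $\Gamma_{\mathcal A}(x)=\mathbf 1\{x\in\mathcal A\}/\sum_{y\in\mathcal A}\Pi(y)$. Then $\tilde{\mathcal B}_{\mathcal X}$ is the convex hull of $\{\Gamma_{\mathcal A}:\mathcal A\text{ a Ferrers subset of }\mathcal X\}$, and each such $\Gamma_{\mathcal A}$ is an extreme point of $\tilde{\mathcal B}_{\mathcal X}$.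
   Context: $e_i$ is the $i$-th unit vector of $\mathbb N^n$; $\le$ is componentwise. A set $\mathcal X\subseteq\mathbb N^n$ is a Ferrers set if $0\in\mathcal X$ and $x\in\mathcal X$, $y\in\mathbb N^n$, $y\le x$ imply $y\in\mathcal X$. *)

From HB Require Import structures.
From mathcomp Require Import all_boot all_order all_algebra.
From mathcomp Require Import finmap.
Set Implicit Arguments. Unset Strict Implicit. Unset Printing Implicit Defensive.
Import Order.TTheory GRing.Theory Num.Theory.
Local Open Scope ring_scope.
Local Open Scope fset_scope.

Definition pt (n : nat) := {ffun 'I_n -> nat}.

Definition pt0 (n : nat) : pt n := [ffun => 0%N].
Definition ptle (n : nat) (x y : pt n) : bool := [forall i, (x i <= y i)%N].
Definition ptsucc (n : nat) (x : pt n) (i : 'I_n) : pt n :=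
  [ffun j => (x j + (j == i))%N].

Definition ferrers (n : nat) (A : {fset pt n}) : Prop :=
  pt0 n \in A /\ forall x y : pt n, x \in A -> ptle y x -> y \in A.

Definition inBtilde (R : realFieldType) (n : nat) (X : {fset pt n})
    (Pi G : pt n -> R) : Prop :=
  (forall x, x \in X -> 0 <= G x) /\
  (forall x i, x \in X -> ptsucc x i \in X -> G (ptsucc x i) <= G x) /\
  \sum_(x <- X) Pi x * G x = 1.

Definition GammaA (R : realFieldType) (n : nat) (Pi : pt n -> R)
    (A : {fset pt n}) : pt n -> R :=
  fun x => (x \in A)%:R / \sum_(y <- A) Pi y.

Definition GammaFerrers (R : realFieldType) (n : nat) (X : {fset pt n})
    (Pi : pt n -> R) (F : pt n -> R) : Prop :=
  exists A : {fset pt n}, ferrers A /\ A `<=` X /\ F = GammaA Pi A.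

Definition in_conv_hull (R : realFieldType) (n : nat) (X : {fset pt n})
    (S : (pt n -> R) -> Prop) (G : pt n -> R) : Prop :=
  exists (k : nat) (lam : 'I_k -> R) (F : 'I_k -> pt n -> R),
    (forall j, 0 <= lam j) /\ \sum_(j < k) lam j = 1 /\
    (forall j, S (F j)) /\
    (forall x, x \in X -> G x = \sum_(j < k) lam j * F j x).

Definition extreme_point (R : realFieldType) (n : nat) (X : {fset pt n})
    (C : (pt n -> R) -> Prop) (G : pt n -> R) : Prop :=
  C G /\
  forall (G1 G2 : pt n -> R) (t : R), C G1 -> C G2 -> 0 < t < 1 ->
    (forall x, x \in X -> G x = (t * G1 x + (1 - t) * G2 x)%R) ->
    (forall x, x \in X -> G1 x = G x /\ G2 x = G x).

From HB Require Import structures.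
From mathcomp Require Import all_boot all_order all_algebra.
From mathcomp Require Import finmap.
From mathcomp Require Import lra.
Import Order.TTheory GRing.Theory Num.Theory.
Set Implicit Arguments. Unset Strict Implicit. Unset Printing Implicit Defensive.
Local Open Scope fset_scope.
Local Open Scope ring_scope.

(* A nonnegative function H that is non-increasing on a Ferrers set X is a
   "layer cake": its positive support P is again a Ferrers set, and
   subtracting min_P H times the indicator of P leaves a function of the same
   kind with a smaller support.  Hence H is a nonnegative combination of
   indicators of Ferrers subsets, and for H in B~_X the normalisation
   sum Pi H = 1 turns this into a convex combination of the Gamma_A.
   Conversely, a G in B~_X vanishing off a Ferrers set A is bounded on A by
   G(0), so the normalisation forces G(0) >= Gamma_A(0), with equality only
   if G = Gamma_A.  Writing Gamma_A = t G1 + (1 - t) G2 in B~_X, both G1 and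
   G2 vanish off A, hence both have G_i(0) = Gamma_A(0), hence G_i = Gamma_A. *)

Section PointOrder.
Variable n : nat.
Implicit Types x y : pt n.

Lemma ptle0 x : ptle (pt0 n) x.
Proof. by apply/forallP => i; rewrite ffunE. Qed.

Lemma ptle_succ x i : ptle x (ptsucc x i).
Proof. by apply/forallP => j; rewrite ffunE leq_addr. Qed.

Definition ptdist y x : nat := \sum_i (x i - y i).

Lemma ptle_neq_succ y x : ptle y x -> y != x ->
  exists i, ptle (ptsucc y i) x /\ (ptdist (ptsucc y i) x < ptdist y x)%N.
Proof.
move=> /forallP yx neq_yx.
have [i lt_yx_i] : exists i, (y i < x i)%N.
  apply/existsP; apply: contraNT neq_yx => /existsPn ge_yx.
  by apply/eqP/ffunP => i; apply/eqP; rewrite eqn_leq yx leqNgt ge_yx.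
exists i; split.
  apply/forallP => j; rewrite ffunE; case: eqP => [->|_]; first by rewrite addn1.
  by rewrite addn0.
rewrite /ptdist (bigD1 i) // [X in (_ < X)%N](bigD1 i) //= ffunE eqxx addn1.
rewrite -addSn subnSK // leq_add2l; apply/eq_leq/eq_bigr => j ji.
by rewrite ffunE (negbTE ji) addn0.
Qed.

End PointOrder.

Lemma ferrers_antitone (R : numDomainType) n (X : {fset pt n}) (G : pt n -> R) :
  ferrers X ->
  (forall x i, x \in X -> ptsucc x i \in X -> G (ptsucc x i) <= G x) ->
  {in X, forall x y, ptle y x -> G x <= G y}.
Proof.
move=> [_ Xdown] Gstep x xX y; move: {2}(ptdist y x) (leqnn (ptdist y x)) => d.
elim: d y => [|d IH] y le_dist yx; have [->|neq_yx] := eqVneq y x;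
  try exact: lexx; have [i [zx lt_dist]] := ptle_neq_succ yx neq_yx.
  by move: (leq_trans lt_dist le_dist); rewrite ltn0.
apply: le_trans (IH _ _ zx) (Gstep _ _ (Xdown _ _ xX yx) (Xdown _ _ xX zx)).
by rewrite -ltnS (leq_trans lt_dist le_dist).
Qed.

Lemma fset_argmin d (T : choiceType) (U : orderType d) (A : {fset T}) (f : T -> U) :
  A != fset0 -> exists2 a, a \in A & {in A, forall x, (f a <= f x)%O}.
Proof.
move=> /fset0Pn[a0 a0A].
case: (@arg_minP _ _ A [` a0A] xpredT (fun x => f (val x))) => //= a _ amin.
by exists (val a) => [|x xA]; [exact: valP | exact: (amin [` xA])].
Qed.

Lemma big_fset_indicator (R : pzSemiRingType) (T : choiceType) (A X : {fset T})
    (f : T -> R) :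
  A `<=` X -> \sum_(x <- X) f x * (x \in A)%:R = \sum_(x <- A) f x.
Proof.
move=> AX; rewrite -(big_fset_incl _ AX) => [|x _ /negbTE ->]; last by rewrite mulr0.
by apply: eq_big_seq => x ->; rewrite mulr1.
Qed.

Lemma sum_gt0_mem (R : numDomainType) (T : choiceType) (A : {fset T}) (f : T -> R) a :
  a \in A -> {in A, forall x, 0 < f x} -> 0 < \sum_(x <- A) f x.
Proof.
move=> aA f_gt0; rewrite (bigD1_seq a) ?fset_uniq //=.
apply: lt_le_trans (f_gt0 a aA) _; rewrite lerDl big_seq_cond sumr_ge0 //.
by move=> x /andP[xA _]; exact/ltW/f_gt0.
Qed.

Lemma convex_eq_lower_bound (R : realFieldType) (t a b c : R) :
  0 < t < 1 -> c <= a -> c <= b -> t * a + (1 - t) * b = c -> a = c /\ b = c.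
Proof.
move=> /andP[t_gt0 t_lt1] ca cb E.
by split; apply/eqP; rewrite eq_le ?ca ?cb andbT; nra.
Qed.

Section LayerCake.
Variables (R : realFieldType) (n : nat) (X : {fset pt n}).
Hypothesis ferrersX : ferrers X.
Implicit Type H : pt n -> R.

Definition pos_support H := [fset x in X | 0 < H x].

Definition peel_layer H (m : R) x := H x - m * (x \in pos_support H)%:R.

Lemma pos_supportE H x : x \in X -> (x \in pos_support H) = (0 < H x).
Proof. by move=> xX; rewrite !inE xX. Qed.

Lemma pos_support_sub H : pos_support H `<=` X.
Proof. by apply/fsubsetP => x; rewrite !inE => /andP[]. Qed.

Lemma pos_support_ferrers H : {in X, forall x y, ptle y x -> H x <= H y} ->
  pos_support H != fset0 -> ferrers (pos_support H).
Proof.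
have [X0 Xdown] := ferrersX; move=> H_anti /fset0Pn[x0 x0P].
have x0X := fsubsetP (pos_support_sub H) _ x0P.
split.
  rewrite pos_supportE // (lt_le_trans _ (H_anti _ x0X _ (ptle0 x0))) //.
  by rewrite -pos_supportE.
move=> x y xP yx; have xX := fsubsetP (pos_support_sub H) _ xP.
rewrite pos_supportE ?(Xdown _ _ xX yx) //.
by rewrite (lt_le_trans _ (H_anti _ xX _ yx)) // -pos_supportE.
Qed.

Lemma peel_layer_spec H :
  {in X, forall x, 0 <= H x} -> {in X, forall x y, ptle y x -> H x <= H y} ->
  pos_support H != fset0 ->
  exists2 m, 0 <= m &
  [/\ {in X, forall x, 0 <= peel_layer H m x},
      {in X, forall x y, ptle y x -> peel_layer H m x <= peel_layer H m y} &
      (#|` pos_support (peel_layer H m)| < #|` pos_support H|)%N].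
Proof.
move=> H_ge0 H_anti P_neq0; set P := pos_support H.
have [x0 x0P x0_min] := fset_argmin H P_neq0.
have PX := pos_support_sub H; have x0X := fsubsetP PX _ x0P.
have m_gt0 : 0 < H x0 by rewrite -pos_supportE.
have offP x : x \in X -> x \notin P -> H x = 0.
  by move=> xX; rewrite pos_supportE // => /negbTE H_le0; apply/eqP;
    rewrite eq_le H_ge0 // andbT leNgt H_le0.
exists (H x0); first exact: ltW.
have peel_ge0 : {in X, forall x, 0 <= peel_layer H (H x0) x}.
  move=> x xX; rewrite /peel_layer; case: (boolP (x \in P)) => xP.
    by rewrite mulr1 subr_ge0 x0_min.
  by rewrite mulr0 subr0 H_ge0.
split=> //.
  move=> x xX y yx; have yX := ferrersX.2 _ _ xX yx; rewrite /peel_layer.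
  case: (boolP (x \in P)) => xP.
    have yP : y \in P by rewrite pos_supportE // (lt_le_trans _ (H_anti _ xX _ yx))
      // -pos_supportE.
    by rewrite yP !mulr1 lerD2r H_anti.
  by rewrite mulr0 subr0 offP //; exact: peel_ge0.
apply: fproper_ltn_card; rewrite fproperEneq; apply/andP; split.
  apply/negP => /eqP eq_supp.
  have : x0 \in pos_support (peel_layer H (H x0)) by rewrite eq_supp.
  by rewrite pos_supportE // /peel_layer x0P mulr1 subrr ltxx.
apply/fsubsetP => y; rewrite !inE => /andP[yX peel_gt0]; rewrite yX /=.
apply: lt_le_trans peel_gt0 _; rewrite lerBlDr lerDl mulr_ge0 ?ler0n //.
exact: ltW.
Qed.

Lemma ferrers_layer_decomposition H :
  {in X, forall x, 0 <= H x} -> {in X, forall x y, ptle y x -> H x <= H y} ->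
  exists k (mu : 'I_k -> R) (A : 'I_k -> {fset pt n}),
    [/\ forall j, 0 <= mu j, forall j, ferrers (A j) /\ A j `<=` X &
        {in X, forall x, H x = \sum_(j < k) mu j * (x \in A j)%:R}].
Proof.
move: {2}#|` pos_support H| (leqnn #|` pos_support H|) => N.
elim: N H => [|N IH] H le_card H_ge0 H_anti.
  exists 0%N, (fun _ => 0), (fun _ => fset0); split=> [[]|[]|x xX] //.
  rewrite big_ord0; apply/eqP; rewrite eq_le H_ge0 // andbT leNgt -pos_supportE //.
  by move: le_card; rewrite leqn0 cardfs_eq0 => /eqP ->.
have [P0|P_neq0] := eqVneq (pos_support H) fset0.
  by apply: IH => //; rewrite P0 cardfs0.
have [m m_ge0 [peel_ge0 peel_anti lt_card]] := peel_layer_spec H_ge0 H_anti P_neq0.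
have [k [mu [A [mu_ge0 A_ferrers H'E]]]] := IH _ (leq_trans lt_card le_card)
  peel_ge0 peel_anti.
exists k.+1, (fun j => if unlift ord0 j is Some j' then mu j' else m),
  (fun j => if unlift ord0 j is Some j' then A j' else pos_support H).
split=> [j|j|x xX]; first by case: unlift.
  case: unlift => [j'|] //; split; first exact: pos_support_ferrers.
  exact: pos_support_sub.
rewrite big_ord_recl unlift_none; under eq_bigr do rewrite liftK.
by rewrite -H'E // /peel_layer addrC subrK.
Qed.

End LayerCake.

Section FerrersPolytope.
Variables (R : realFieldType) (n : nat) (X : {fset pt n}) (Pi : pt n -> R).
Hypotheses (ferrersX : ferrers X) (Pi_gt0 : {in X, forall x, 0 < Pi x}).

Lemma sumPi_gt0 A : ferrers A -> A `<=` X -> 0 < \sum_(y <- A) Pi y.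
Proof.
move=> [A0 _] AX; apply: (sum_gt0_mem A0) => x xA.
exact/Pi_gt0/(fsubsetP AX).
Qed.

Lemma GammaA_inBtilde A : ferrers A -> A `<=` X -> inBtilde X Pi (GammaA Pi A).
Proof.
move=> A_ferrers AX; have S_gt0 := sumPi_gt0 A_ferrers AX.
split; [|split].
- by move=> x _; rewrite /GammaA divr_ge0 ?ler0n // ltW.
- move=> x i _ _; rewrite /GammaA ler_wpM2r ?invr_ge0 ?(ltW S_gt0) // ler_nat.
  case: (boolP (ptsucc x i \in A)) => // sA.
  by rewrite (A_ferrers.2 _ _ sA (ptle_succ x i)).
- under eq_bigr do rewrite /GammaA mulrA.
  by rewrite -big_distrl /= big_fset_indicator // divff // gt_eqF.
Qed.

Lemma inBtilde_conv_hull (S : (pt n -> R) -> Prop) G :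
  (forall F, S F -> inBtilde X Pi F) -> in_conv_hull X S G -> inBtilde X Pi G.
Proof.
move=> SB [k [lam [F [lam_ge0 [lam_sum1 [SF GE]]]]]].
have FB j := SB _ (SF j).
split; [|split].
- by move=> x xX; rewrite GE // sumr_ge0 // => j _; rewrite mulr_ge0 ?(FB j).1.
- move=> x i xX sX; rewrite !GE //; apply: ler_sum => j _.
  by rewrite ler_wpM2l ?(FB j).2.1.
- rewrite (eq_big_seq (fun x => \sum_(j < k) lam j * (Pi x * F j x))); last first.
    by move=> x xX; rewrite GE // mulr_sumr; apply: eq_bigr => j _; rewrite mulrCA.
  rewrite exchange_big /= -lam_sum1; apply: eq_bigr => j _.
  by rewrite -mulr_sumr (FB j).2.2 mulr1.
Qed.

Lemma inBtilde_conv_hull_GammaFerrers G :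
  inBtilde X Pi G -> in_conv_hull X (GammaFerrers X Pi) G.
Proof.
move=> [G_ge0 [G_step G_sum1]].
have [k [mu [A [mu_ge0 A_ferrers GE]]]] :=
  ferrers_layer_decomposition ferrersX G_ge0 (ferrers_antitone ferrersX G_step).
have S_gt0 j := sumPi_gt0 (A_ferrers j).1 (A_ferrers j).2.
exists k, (fun j => mu j * \sum_(y <- A j) Pi y), (fun j => GammaA Pi (A j)).
split; [|split; [|split]].
- by move=> j; rewrite mulr_ge0 ?mu_ge0 // ltW.
- rewrite -G_sum1 (eq_big_seq (fun x => \sum_(j < k) Pi x * (mu j * (x \in A j)%:R)));
    last by move=> x xX; rewrite GE // mulr_sumr.
  rewrite exchange_big /=; apply: eq_bigr => j _.
  rewrite -(big_fset_indicator _ (A_ferrers j).2) mulr_sumr.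
  by apply: eq_bigr => x _; rewrite mulrCA.
- by move=> j; exists (A j); have [] := A_ferrers j.
- move=> x xX; rewrite GE //; apply: eq_bigr => j _.
  rewrite /GammaA -!mulrA; congr (_ * _).
  by rewrite mulrCA mulfV ?lt0r_neq0 // mulr1.
Qed.

Section Extremality.
Variable A : {fset pt n}.
Hypotheses (A_ferrers : ferrers A) (AX : A `<=` X).
Variable G : pt n -> R.
Hypotheses (G_inBtilde : inBtilde X Pi G)
  (G_offA : {in X, forall x, x \notin A -> G x = 0}).

Let S := \sum_(y <- A) Pi y.

Lemma GammaA_pt0 : GammaA Pi A (pt0 n) = S^-1.
Proof. by rewrite /GammaA A_ferrers.1 mul1r. Qed.

Lemma inBtilde_sumA : \sum_(x <- A) Pi x * G x = 1.
Proof.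
rewrite -G_inBtilde.2.2 (big_fset_incl _ AX) // => x xX xA.
by rewrite G_offA ?mulr0.
Qed.

Lemma inBtilde_leA0 x : x \in A -> G x <= G (pt0 n).
Proof.
move=> xA; have [_ [G_step _]] := G_inBtilde.
exact: (ferrers_antitone ferrersX G_step (fsubsetP AX _ xA) (ptle0 x)).
Qed.

(* 1 = sum_A Pi G <= S G(0). *)
Lemma GammaA_pt0_le : GammaA Pi A (pt0 n) <= G (pt0 n).
Proof.
have S_gt0 : 0 < S by exact: sumPi_gt0.
rewrite GammaA_pt0 -(ler_pM2l S_gt0) mulfV ?lt0r_neq0 // -inBtilde_sumA.
rewrite /S big_distrl /= big_seq [X in _ <= X]big_seq; apply: ler_sum => x xA.
by rewrite ler_wpM2l ?inBtilde_leA0 // ltW // Pi_gt0 // (fsubsetP AX).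
Qed.

(* If G(0) = 1/S, then sum_A Pi (G(0) - G) = 0 is a sum of nonnegative terms. *)
Lemma inBtilde_eq_GammaA : G (pt0 n) = GammaA Pi A (pt0 n) ->
  {in X, forall x, G x = GammaA Pi A x}.
Proof.
rewrite GammaA_pt0 => G0; have S_gt0 : 0 < S by exact: sumPi_gt0.
have dev_ge0 x : x \in A -> 0 <= Pi x * (S^-1 - G x).
  move=> xA; rewrite mulr_ge0 ?subr_ge0 -?G0 ?inBtilde_leA0 //.
  by rewrite ltW // Pi_gt0 // (fsubsetP AX).
have : \sum_(x <- A | x \in A) Pi x * (S^-1 - G x) == 0.
  rewrite -big_seq; under eq_bigr do rewrite mulrBr.
  by rewrite sumrB inBtilde_sumA -big_distrl /= -/S mulfV ?lt0r_neq0 // subrr.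
rewrite psumr_eq0 // => /allP dev0 x xX; rewrite /GammaA.
case: (boolP (x \in A)) => xA; last by rewrite G_offA // mul0r.
move: (dev0 x xA); rewrite xA /= mulf_eq0 gt_eqF ?Pi_gt0 //= subr_eq0.
by move=> /eqP <-; rewrite mul1r.
Qed.

End Extremality.

Lemma GammaA_extreme A : ferrers A -> A `<=` X ->
  extreme_point X (inBtilde X Pi) (GammaA Pi A).
Proof.
move=> A_ferrers AX; split; first exact: GammaA_inBtilde.
move=> G1 G2 t G1B G2B t01 GE.
have offA : {in X, forall x, x \notin A -> G1 x = 0 /\ G2 x = 0}.
  move=> x xX xA; apply: (convex_eq_lower_bound t01); rewrite ?G1B.1 ?G2B.1 //.
  by rewrite -GE // /GammaA (negbTE xA) mul0r.
pose off1 x xX xA := (offA x xX xA).1; pose off2 x xX xA := (offA x xX xA).2.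
have pt0X := fsubsetP AX _ A_ferrers.1.
have [G1_0 G2_0] := convex_eq_lower_bound t01
  (GammaA_pt0_le A_ferrers AX G1B off1) (GammaA_pt0_le A_ferrers AX G2B off2)
  (esym (GE _ pt0X)).
move=> x xX; split.
  exact: (inBtilde_eq_GammaA A_ferrers AX G1B off1 G1_0).
exact: (inBtilde_eq_GammaA A_ferrers AX G2B off2 G2_0).
Qed.

End FerrersPolytope.

Theorem mainTheorem9 (R : realFieldType) (n : nat) (X : {fset pt n})
    (Pi : pt n -> R) :
  (1 <= n)%N -> ferrers X -> (forall x, x \in X -> 0 < Pi x) ->
  (forall G : pt n -> R,
     inBtilde X Pi G <-> in_conv_hull X (GammaFerrers X Pi) G) /\
  (forall A : {fset pt n}, ferrers A -> A `<=` X ->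
     extreme_point X (inBtilde X Pi) (GammaA Pi A)).
Proof.
move=> _ ferrersX Pi_gt0; split; last exact: GammaA_extreme.
move=> G; split; first exact: inBtilde_conv_hull_GammaFerrers.
apply: inBtilde_conv_hull => F [A [A_ferrers [AX ->]]].
exact: GammaA_inBtilde.
Qed.
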